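(* Let $(T,\eta,\mu)$ be a monad on $\mathsf{Set}$ and $F$ a polynomial functor. Let $\zeta\colon TF\Rightarrow FT$ be constructed recursively over the structure of $F$ as follows: for $F=C_B$, the unique component $\zeta\colon TB\to B$ is an (Eilenberg–Moore) $T$-algebra on $B$; for $F=\mathrm{Id}$, $\zeta=\mathrm{id}_T$; for $F=\prod_{i\in I}F_i$, $\zeta=\langle\zeta^i\circ T\pi_i\rangle_{i\in I}$ where $\zeta^i\colon TF_i\Rightarrow F_iT$ are the recursively constructed transformations; for $F=F_1+F_2$, $\zeta=(\zeta^1+\zeta^2)\circ g_{F_1,F_2}$, where $g\colon T((-)+(-))\Rightarrow T(-)+T(-)$ is a natural transformation between bifunctors. If every such $g$ used in the construction is compatible with the unit and with the multiplication of $T$, then $\zeta$ is a distributive law (EM-law) of the monad $T$ over $F$.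
   Context: Polynomial functors are generated by $F::=C_B\mid\mathrm{Id}\mid\prod_{i\in I}F_i\mid F_1+F_2$ with $C_B$ the constant functor at a set $B$ and $I$ an arbitrary index set. A distributive law (EM-law) of a monad $(T,\eta,\mu)$ over a functor $F$ is a natural transformation $\zeta\colon TF\Rightarrow FT$ with $\zeta_X\circ\eta_{FX}=F\eta_X$ and $\zeta_X\circ\mu_{FX}=F\mu_X\circ\zeta_{TX}\circ T\zeta_X$ for all $X$. A natural transformation $g\colon T((-)+(-))\Rightarrow T(-)+T(-)$ is compatible with the unit if $g_{Y_1,Y_2}\circ\eta_{Y_1+Y_2}=\eta_{Y_1}+\eta_{Y_2}$ for all sets $Y_1,Y_2$, and compatible with the multiplication if $g_{Y_1,Y_2}\circ\mu_{Y_1+Y_2}=(\mu_{Y_1}+\mu_{Y_2})\circ g_{TY_1,TY_2}\circ Tg_{Y_1,Y_2}$ for all sets $Y_1,Y_2$. *)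

(* The category Set is modelled by Rocq's Type with (pointwise)
   function equality. *)

Record monad := Monad {
  T : Type -> Type;
  fmap : forall (A B : Type), (A -> B) -> T A -> T B;
  eta : forall A : Type, A -> T A;
  mu : forall A : Type, T (T A) -> T A;
  fmap_id : forall A (t : T A), fmap A A (fun x => x) t = t;
  fmap_comp : forall A B C (f : A -> B) (g : B -> C) (t : T A),
      fmap A C (fun x => g (f x)) t = fmap B C g (fmap A B f t);
  eta_nat : forall A B (f : A -> B) (x : A),
      fmap A B f (eta A x) = eta B (f x);
  mu_nat : forall A B (f : A -> B) (t : T (T A)),
      fmap A B f (mu A t) = mu B (fmap (T A) (T B) (fmap A B f) t);
  mu_eta_l : forall A (t : T A), mu A (eta (T A) t) = t;
  mu_eta_r : forall A (t : T A), mu A (fmap A (T A) (eta A) t) = t;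
  mu_assoc : forall A (t : T (T (T A))),
      mu A (fmap (T (T A)) (T A) (mu A) t) = mu A (mu (T A) t)
}.

Arguments fmap {m A B} _ _.
Arguments eta {m A} _.
Arguments mu {m A} _.

Inductive poly : Type :=
| PConst (B : Type)
| PId
| PProd (Idx : Type) (Fs : Idx -> poly)
| PSum (F1 F2 : poly).

Fixpoint obj (F : poly) (X : Type) : Type :=
  match F with
  | PConst B => B
  | PId => X
  | PProd Idx Fs => forall i : Idx, obj (Fs i) X
  | PSum F1 F2 => (obj F1 X + obj F2 X)%type
  end.

Definition sum_map {A B C D : Type} (f : A -> C) (g : B -> D) (s : A + B) : C + D :=
  match s with inl a => inl (f a) | inr b => inr (g b) end.

Fixpoint pmap (F : poly) {X Y : Type} (f : X -> Y) : obj F X -> obj F Y :=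
  match F return obj F X -> obj F Y with
  | PConst B => fun b => b
  | PId => f
  | PProd Idx Fs => fun p i => pmap (Fs i) f (p i)
  | PSum F1 F2 => sum_map (pmap F1 f) (pmap F2 f)
  end.

Definition sum_trans (M : monad) : Type :=
  forall Y1 Y2 : Type, T M (Y1 + Y2) -> (T M Y1 + T M Y2)%type.

(** Data used in the recursive construction of zeta: an algebra structure
    T B -> B at each constant node, and a transformation g at each sum node. *)
Fixpoint annot (M : monad) (F : poly) : Type :=
  match F with
  | PConst B => T M B -> B
  | PId => unit
  | PProd Idx Fs => forall i : Idx, annot M (Fs i)
  | PSum F1 F2 => (annot M F1 * annot M F2 * sum_trans M)%type
  end.

Fixpoint zeta (M : monad) (F : poly) : annot M F -> forall X : Type, T M (obj F X) -> obj F (T M X) :=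
  match F return annot M F -> forall X : Type, T M (obj F X) -> obj F (T M X) with
  | PConst B => fun alpha X t => alpha t
  | PId => fun _ X t => t
  | PProd Idx Fs => fun a X t i =>
      zeta M (Fs i) (a i) X (fmap (fun p : obj (PProd Idx Fs) X => p i) t)
  | PSum F1 F2 => fun a X t =>
      let '(a1, a2, g) := a in
      sum_map (zeta M F1 a1 X) (zeta M F2 a2 X) (g (obj F1 X) (obj F2 X) t)
  end.

Definition EM_algebra (M : monad) (B : Type) (alpha : T M B -> B) : Prop :=
  (forall b : B, alpha (eta b) = b) /\
  (forall t : T M (T M B), alpha (mu t) = alpha (fmap alpha t)).

Definition sum_trans_natural (M : monad) (g : sum_trans M) : Prop :=
  forall Y1 Y2 Z1 Z2 (f1 : Y1 -> Z1) (f2 : Y2 -> Z2) (t : T M (Y1 + Y2)),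
    g Z1 Z2 (fmap (sum_map f1 f2) t) = sum_map (fmap f1) (fmap f2) (g Y1 Y2 t).

Definition compat_unit (M : monad) (g : sum_trans M) : Prop :=
  forall Y1 Y2 (x : Y1 + Y2),
    g Y1 Y2 (eta x) = sum_map (@eta M Y1) (@eta M Y2) x.

Definition compat_mult (M : monad) (g : sum_trans M) : Prop :=
  forall Y1 Y2 (t : T M (T M (Y1 + Y2))),
    g Y1 Y2 (mu t) =
    sum_map (@mu M Y1) (@mu M Y2) (g (T M Y1) (T M Y2) (fmap (g Y1 Y2) t)).

Fixpoint annot_ok (M : monad) (F : poly) : annot M F -> Prop :=
  match F return annot M F -> Prop with
  | PConst B => fun alpha => EM_algebra M B alpha
  | PId => fun _ => True
  | PProd Idx Fs => fun a => forall i : Idx, annot_ok M (Fs i) (a i)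
  | PSum F1 F2 => fun a =>
      let '(a1, a2, g) := a in
      annot_ok M F1 a1 /\ annot_ok M F2 a2 /\
      sum_trans_natural M g /\ compat_unit M g /\ compat_mult M g
  end.

Definition is_EM_law (M : monad) (F : poly)
    (z : forall X : Type, T M (obj F X) -> obj F (T M X)) : Prop :=
  (forall X Y (f : X -> Y) (t : T M (obj F X)),
      pmap F (fmap f) (z X t) = z Y (fmap (pmap F f) t)) /\
  (forall X (x : obj F X), z X (eta x) = pmap F (@eta M X) x) /\
  (forall X (t : T M (T M (obj F X))),
      z X (mu t) = pmap F (@mu M X) (z (T M X) (fmap (z X) t))).

From Stdlib Require Import FunctionalExtensionality.

(* EM-laws are closed under the four formation rules of polynomial functors:
   an EM algebra on B is exactly an EM-law over C_B, the identity is an EM-law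
   over Id, tupling preserves each law componentwise, and for a coproduct the
   unit and multiplication laws of g transport those of the summands through
   (zeta^1 + zeta^2). *)

Lemma sum_map_comp {A B C D E G : Type} (f : A -> C) (g : B -> D)
    (h : C -> E) (k : D -> G) (s : A + B) :
  sum_map h k (sum_map f g s) = sum_map (fun a => h (f a)) (fun b => k (g b)) s.
Proof. now destruct s. Qed.

Lemma sum_map_ext {A B C D : Type} (f f' : A -> C) (g g' : B -> D) (s : A + B) :
  (forall a, f a = f' a) -> (forall b, g b = g' b) ->
  sum_map f g s = sum_map f' g' s.
Proof. intros Hf Hg; destruct s; simpl; f_equal; auto. Qed.

Section ClosureProperties.

Variable M : monad.

Definition prod_law (Idx : Type) (Fs : Idx -> poly)
    (zs : forall i X, T M (obj (Fs i) X) -> obj (Fs i) (T M X))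
    (X : Type) (t : T M (obj (PProd Idx Fs) X)) : obj (PProd Idx Fs) (T M X) :=
  fun i => zs i X (fmap (fun p : obj (PProd Idx Fs) X => p i) t).

Definition sum_law (F1 F2 : poly)
    (z1 : forall X, T M (obj F1 X) -> obj F1 (T M X))
    (z2 : forall X, T M (obj F2 X) -> obj F2 (T M X))
    (g : sum_trans M) (X : Type) (t : T M (obj (PSum F1 F2) X)) :
    obj (PSum F1 F2) (T M X) :=
  sum_map (z1 X) (z2 X) (g (obj F1 X) (obj F2 X) t).

Lemma is_EM_law_const (B : Type) (alpha : T M B -> B) :
  EM_algebra M B alpha -> is_EM_law M (PConst B) (fun _ t => alpha t).
Proof.
  intros [alpha_eta alpha_mu]; split; [|split]; simpl.
  - intros X Y f t; now rewrite fmap_id.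
  - intros X b; apply alpha_eta.
  - intros X t; apply alpha_mu.
Qed.

Lemma is_EM_law_id : is_EM_law M PId (fun _ t => t).
Proof.
  split; [|split]; simpl; try reflexivity.
  intros X t; now rewrite fmap_id.
Qed.

Lemma is_EM_law_prod (Idx : Type) (Fs : Idx -> poly)
    (zs : forall i X, T M (obj (Fs i) X) -> obj (Fs i) (T M X)) :
  (forall i, is_EM_law M (Fs i) (zs i)) ->
  is_EM_law M (PProd Idx Fs) (prod_law Idx Fs zs).
Proof.
  intros Hzs; unfold prod_law; split; [|split]; simpl;
    intros; apply functional_extensionality_dep; intro i;
    destruct (Hzs i) as [z_nat [z_eta z_mu]].
  - rewrite z_nat, <- !fmap_comp; reflexivity.
  - rewrite eta_nat; apply z_eta.
  - rewrite mu_nat, z_mu, <- !fmap_comp; reflexivity.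
Qed.

Lemma is_EM_law_sum (F1 F2 : poly)
    (z1 : forall X, T M (obj F1 X) -> obj F1 (T M X))
    (z2 : forall X, T M (obj F2 X) -> obj F2 (T M X)) (g : sum_trans M) :
  is_EM_law M F1 z1 -> is_EM_law M F2 z2 ->
  sum_trans_natural M g -> compat_unit M g -> compat_mult M g ->
  is_EM_law M (PSum F1 F2) (sum_law F1 F2 z1 z2 g).
Proof.
  intros [z1_nat [z1_eta z1_mu]] [z2_nat [z2_eta z2_mu]] g_nat g_eta g_mu.
  unfold sum_law; split; [|split]; simpl.
  - intros X Y f t.
    rewrite g_nat, !sum_map_comp; apply sum_map_ext; auto.
  - intros X x.
    rewrite g_eta, sum_map_comp; apply sum_map_ext; auto.
  - intros X t.
    (* Naturality of g moves (zeta^1 + zeta^2) past g inside fmap. *)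
    rewrite g_mu, (fmap_comp M _ _ _ (g _ _) (sum_map (z1 X) (z2 X))), g_nat,
      !sum_map_comp.
    apply sum_map_ext; auto.
Qed.

End ClosureProperties.

Theorem mainTheorem9 (M : monad) (F : poly) (a : annot M F) :
  annot_ok M F a -> is_EM_law M F (zeta M F a).
Proof.
  revert a; induction F as [B | | Idx Fs IH | F1 IH1 F2 IH2]; intros a Ha.
  - exact (is_EM_law_const M B a Ha).
  - exact (is_EM_law_id M).
  - exact (is_EM_law_prod M Idx Fs (fun i => zeta M (Fs i) (a i))
             (fun i => IH i (a i) (Ha i))).
  - destruct a as [[a1 a2] g], Ha as [Ha1 [Ha2 [g_nat [g_eta g_mu]]]].
    exact (is_EM_law_sum M F1 F2 _ _ g (IH1 a1 Ha1) (IH2 a2 Ha2)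
             g_nat g_eta g_mu).
Qed.
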